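(* Let $\{\mathcal{C}_n\}$ be a sequence of binary linear codes with rates $r_n\to r$ for some $r\in(0,1)$, and let $h^{(n)}$ be the average EXIT function of $\mathcal{C}_n$. The following are equivalent: (S1) $\{\mathcal{C}_n\}$ is capacity achieving on the BEC under bit-MAP decoding; (S2) $\lim_{n\to\infty}h^{(n)}(p)=0$ for $0\le p<1-r$ and $\lim_{n\to\infty}h^{(n)}(p)=1$ for $1-r<p\le1$; (S3) for every $0<\epsilon\le 1/2$, $\lim_{n\to\infty}\big(p^{(n)}_{1-\epsilon}-p^{(n)}_{\epsilon}\big)=0$, where $p^{(n)}_t=\inf\{p\in[0,1]:h^{(n)}(p)\ge t\}$.
   Context: Binary linear codes are assumed proper (no coordinate zero in all codewords) and of minimum distance at least $2$; the rate of a length-$N$, dimension-$K$ code is $K/N$. A codeword $\underline{X}$ is uniform on the code and sent over $\mathrm{BEC}(p)$ (each bit independently erased with probability $p$), giving $\underline{Y}$. The bit-MAP erasure probability of bit $i$, $P_{b,i}(p)$, is the probability that $X_i$ is not uniquely determined by $\underline{Y}$, and $P_b(p)=\frac1N\sum_i P_{b,i}(p)$. The average EXIT function is $h(p)=\frac1N\sum_i H(X_i\mid\underline{Y}_{\sim i})$ (entropy in bits, $\underline{Y}_{\sim i}$ omits coordinate $i$); it is continuous and strictly increasing on $[0,1]$ with $h(0)=0$, $h(1)=1$. A sequence of codes with rates $r_n\to r\in(0,1)$ is capacity achieving on the BEC under bit-MAP decoding if $\lim_n P_b^{(n)}(p)=0$ for every $p\in[0,1-r)$. *)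

From mathcomp Require Import all_boot.
From Stdlib Require Import Reals ClassicalEpsilon.

Set Implicit Arguments.
Unset Strict Implicit.
Unset Printing Implicit Defensive.

Definition word (N : nat) := {ffun 'I_N -> bool}.
Definition zerow (N : nat) : word N := [ffun => false].
Definition xorw (N : nat) (u v : word N) : word N := [ffun j => xorb (u j) (v j)].
Definition weight (N : nat) (u : word N) : nat := #|[set j | u j]|.

Definition is_binary_linear_code (N : nat) (C : {set word N}) : Prop :=
  zerow N \in C /\ (forall u v, u \in C -> v \in C -> xorw u v \in C).
Definition proper_code (N : nat) (C : {set word N}) : Prop :=
  forall i : 'I_N, exists2 c, c \in C & c i = true.
Definition min_dist_ge2 (N : nat) (C : {set word N}) : Prop :=
  forall c, c \in C -> c != zerow N -> (1 < weight c)%N.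
Definition code_dim (N : nat) (C : {set word N}) : nat := trunc_log 2 #|C|.
Definition rate (N : nat) (C : {set word N}) : R := (INR (code_dim C) / INR N)%R.

Notation "\sumR_ ( i 'in' A ) F" := (\big[Rplus/0%R]_(i in A) F%R)
  (at level 41, F at level 41, i, A at level 50).
Notation "\sumR_ ( i : T ) F" := (\big[Rplus/0%R]_(i : T) F%R)
  (at level 41, F at level 41, i at level 50).

Definition indR (b : bool) : R := if b then 1%R else 0%R.

(** BEC(p): E is the (random) set of erased positions. *)
Definition erasure_prob (N : nat) (p : R) (E : {set 'I_N}) : R :=
  (p ^ #|E| * (1 - p) ^ (subn N #|E|))%R.

(** Joint probability of (X = x, erasure pattern = E), X uniform on C. *)
Definition jointw (N : nat) (C : {set word N}) (p : R) (x : word N) (E : {set 'I_N}) : R :=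
  (/ INR #|C| * erasure_prob p E)%R.

(** Bit-MAP erasure probability of bit i: X_i not uniquely determined by Y. *)
Definition bit_erasure_prob (N : nat) (C : {set word N}) (p : R) (i : 'I_N) : R :=
  \sumR_(x in C) \sumR_(E : {set 'I_N})
    (jointw C p x E *
     indR [exists c in C, [forall j, (j \notin E) ==> (c j == x j)] && (c i != x i)])%R.

Definition Pb (N : nat) (C : {set word N}) (p : R) : R :=
  (/ INR N * \sumR_(i : 'I_N) bit_erasure_prob C p i)%R.

(** Channel output with coordinate i omitted (encoded by None at i; erasures are None). *)
Definition obs_wo (N : nat) (i : 'I_N) (x : word N) (E : {set 'I_N})
  : {ffun 'I_N -> option bool} :=
  [ffun j => if (j == i) || (j \in E) then None else Some (x j)].

(** P(Y_~i = y) and P(X_i = b, Y_~i = y). *)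
Definition probY (N : nat) (C : {set word N}) (p : R) (i : 'I_N)
  (y : {ffun 'I_N -> option bool}) : R :=
  \sumR_(x in C) \sumR_(E : {set 'I_N}) (jointw C p x E * indR (obs_wo i x E == y))%R.
Definition probXY (N : nat) (C : {set word N}) (p : R) (i : 'I_N) (b : bool)
  (y : {ffun 'I_N -> option bool}) : R :=
  \sumR_(x in C) \sumR_(E : {set 'I_N})
    (jointw C p x E * indR ((obs_wo i x E == y) && (x i == b)))%R.

Definition log2 (t : R) : R := (ln t / ln 2)%R.

Definition cond_entropy (N : nat) (C : {set word N}) (p : R) (i : 'I_N) : R :=
  \sumR_(x in C) \sumR_(E : {set 'I_N})
    (jointw C p x E *
      - log2 (probXY C p i (x i) (obs_wo i x E) / probY C p i (obs_wo i x E)))%R.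

Definition exit_fun (N : nat) (C : {set word N}) (p : R) : R :=
  (/ INR N * \sumR_(i : 'I_N) cond_entropy C p i)%R.

Definition is_glb (S : R -> Prop) (q : R) : Prop :=
  (forall x, S x -> (q <= x)%R) /\
  (forall l, (forall x, S x -> (l <= x)%R) -> (l <= q)%R).
Definition infR (S : R -> Prop) : R := epsilon (inhabits 0%R) (is_glb S).

Definition exit_threshold (N : nat) (C : {set word N}) (t : R) : R :=
  infR (fun p => (0 <= p <= 1)%R /\ (t <= exit_fun C p)%R).

Definition capacity_achieving (N : nat -> nat) (C : forall n, {set word (N n)}) (r : R)
  : Prop :=
  forall p, (0 <= p < 1 - r)%R -> Un_cv (fun n => Pb (C n) p) 0%R.

Definition exit_step (N : nat -> nat) (C : forall n, {set word (N n)}) (r : R) : Prop :=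
  (forall p, (0 <= p < 1 - r)%R -> Un_cv (fun n => exit_fun (C n) p) 0%R) /\
  (forall p, (1 - r < p <= 1)%R -> Un_cv (fun n => exit_fun (C n) p) 1%R).

Definition exit_sharp (N : nat -> nat) (C : forall n, {set word (N n)}) : Prop :=
  forall eps, (0 < eps <= 1 / 2)%R ->
    Un_cv (fun n => exit_threshold (C n) (1 - eps) - exit_threshold (C n) eps)%R 0%R.

(* For a linear code, bit [i] cannot be recovered from the unerased positions
   exactly when some codeword supported on the erased set has a 1 at [i]. Hence
   H(X_i | Y_~i) is the probability that [i] is unrecoverable once it is erased
   itself, and P_b,i = p H(X_i | Y_~i). Adding [i] to an erased set [E] raises
   the dimension of the subcode supported on [E] by exactly that indicator, so
   by Russo's formula the EXIT function h is the derivative of the normalised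
   average subcode dimension G(p), and the area under h is G(1) - G(0) = rate.
   Moreover h is nondecreasing from h(0) = 0 (minimum distance >= 2) to
   h(1) = 1 (properness). For such functions with areas r_n -> r, the area
   constraint turns vanishing of h below 1 - r into convergence to 1 above it,
   and this step shape is equivalent to the transition window [p_eps, p_(1-eps)]
   shrinking; finally P_b = p h links (S1) to the vanishing of h below 1 - r. *)

From mathcomp Require Import all_boot.
From HB Require Import structures.
From Stdlib Require Import Reals Lra Lia Classical ClassicalEpsilon.

Set Implicit Arguments.
Unset Strict Implicit.
Unset Printing Implicit Defensive.

Local Open Scope R_scope.

(** * Finite sums of reals *)

HB.instance Definition _ := Monoid.isComLaw.Build R 0 Rplus
  (fun x y z => esym (Rplus_assoc x y z)) Rplus_comm Rplus_0_l.
HB.instance Definition _ := Monoid.isComLaw.Build R 1 Rmult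
  (fun x y z => esym (Rmult_assoc x y z)) Rmult_comm Rmult_1_l.
HB.instance Definition _ := Monoid.isMulLaw.Build R 0 Rmult Rmult_0_l Rmult_0_r.
HB.instance Definition _ :=
  Monoid.isAddLaw.Build R Rmult Rplus Rmult_plus_distr_r Rmult_plus_distr_l.

Lemma sumR_le (I : Type) (s : seq I) (P : pred I) (F G : I -> R) :
  (forall i, P i -> F i <= G i) ->
  \big[Rplus/0]_(i <- s | P i) F i <= \big[Rplus/0]_(i <- s | P i) G i.
Proof.
move=> FG; apply: (big_ind2 (fun a b => a <= b)) => //; first lra.
by move=> a b c d; lra.
Qed.

Lemma sumR_ge0 (I : Type) (s : seq I) (P : pred I) (F : I -> R) :
  (forall i, P i -> 0 <= F i) -> 0 <= \big[Rplus/0]_(i <- s | P i) F i.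
Proof.
move=> F0; apply: (big_ind (fun a => 0 <= a)) => //; first lra.
by move=> a b; lra.
Qed.

Lemma sumR_minus (I : Type) (s : seq I) (P : pred I) (F G : I -> R) :
  \big[Rplus/0]_(i <- s | P i) (F i - G i) =
  \big[Rplus/0]_(i <- s | P i) F i - \big[Rplus/0]_(i <- s | P i) G i.
Proof. by rewrite /Rminus big_split (big_morph Ropp Ropp_plus_distr Ropp_0). Qed.

Lemma indR_andb (a b : bool) : indR (a && b) = indR a * indR b.
Proof. by case: a; case: b; rewrite /indR /=; ring. Qed.

Lemma INR_bool (b : bool) : INR b = indR b.
Proof. by case: b. Qed.

Lemma sumR_const (T : finType) (A : {pred T}) (a : R) :
  \big[Rplus/0]_(i in A) a = INR #|A| * a.
Proof.
rewrite big_const; elim: #|A| => [|n IH]; first by rewrite /=; lra.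
by rewrite iterS IH S_INR; lra.
Qed.

Lemma sumR_indR (T : finType) (P Q : pred T) :
  \big[Rplus/0]_(i | P i) indR (Q i) = INR #|[set i | P i && Q i]|.
Proof.
rewrite (bigID Q) /= [X in _ + X]big1 ?Rplus_0_r; last by move=> i /andP[_ /negbTE ->].
rewrite (eq_bigr (fun _ => 1)); last by move=> i /andP[_ ->].
by rewrite -[RHS]Rmult_1_r -sumR_const; apply: eq_bigl => i; rewrite inE.
Qed.

Lemma sumR_term_le (T : finType) (F : T -> R) (j : T) :
  (forall i, 0 <= F i) -> F j <= \big[Rplus/0]_(i : T) F i.
Proof.
move=> F0; rewrite (bigD1 j) //=.
have := @sumR_ge0 _ (index_enum T) (fun i => i != j) F (fun i _ => F0 i); lra.
Qed.

Lemma sumR_notin_split (n : nat) (i : 'I_n) (phi : {set 'I_n} -> R) :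
  \big[Rplus/0]_(E : {set 'I_n}) phi E =
  \big[Rplus/0]_(E : {set 'I_n} | i \notin E) (phi E + phi (i |: E)).
Proof.
rewrite big_split /= [LHS](bigID (fun E : {set 'I_n} => i \notin E)) /=; congr (_ + _).
rewrite (reindex_onto (fun E => i |: E) (fun E => E :\ i)) /=; last first.
  by move=> E; rewrite negbK => iE; rewrite setD1K.
apply: eq_bigl => E; rewrite setU11 /=.
by apply/eqP/idP => [<-|iE]; [rewrite setD11 | rewrite setU1K].
Qed.

Lemma derivable_pt_lim_sumR (I : Type) (s : seq I) (P : pred I)
    (F : I -> R -> R) (F' : I -> R) x :
  (forall i, P i -> derivable_pt_lim (F i) x (F' i)) ->
  derivable_pt_lim (fun y => \big[Rplus/0]_(i <- s | P i) F i y) x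
                   (\big[Rplus/0]_(i <- s | P i) F' i).
Proof.
move=> dF; elim: s => [|a s IH].
  rewrite big_nil; apply: derivable_pt_lim_ext (derivable_pt_lim_const 0 x) => y.
  by rewrite big_nil.
rewrite big_cons; case: ifP => Pa.
  apply: derivable_pt_lim_ext (derivable_pt_lim_plus _ _ _ _ _ (dF a Pa) IH) => y.
  by rewrite big_cons Pa.
by apply: derivable_pt_lim_ext IH => y; rewrite big_cons Pa.
Qed.

(** * Erasure patterns and Russo's formula *)

(* For [i \notin E], the probability that the erasure pattern on the [N - 1]
   coordinates other than [i] is [E]. *)
Definition erasure_prob_off (N : nat) (p : R) (E : {set 'I_N}) : R :=
  p ^ #|E| * (1 - p) ^ (N - #|E|).-1.

Lemma card_lt_notin (N : nat) (i : 'I_N) (E : {set 'I_N}) : i \notin E -> (#|E| < N)%nat.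
Proof. by move=> iE; have := max_card (i |: E); rewrite cardsU1 iE card_ord. Qed.

Lemma erasure_prob_notin (N : nat) p (i : 'I_N) (E : {set 'I_N}) : i \notin E ->
  erasure_prob p E = (1 - p) * erasure_prob_off p E.
Proof.
move=> iE; rewrite /erasure_prob /erasure_prob_off -(prednK (_ : (0 < N - #|E|)%nat)).
  by rewrite -pred_Sn /=; ring.
by rewrite subn_gt0 (card_lt_notin iE).
Qed.

Lemma erasure_prob_setU1 (N : nat) p (i : 'I_N) (E : {set 'I_N}) : i \notin E ->
  erasure_prob p (i |: E) = p * erasure_prob_off p E.
Proof.
by move=> iE; rewrite /erasure_prob /erasure_prob_off cardsU1 iE add1n subnS /=; ring.
Qed.

Lemma derivable_pt_lim_erasure_prob (N : nat) (E : {set 'I_N}) x :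
  derivable_pt_lim (fun p => erasure_prob p E) x
    (\big[Rplus/0]_(j in E) erasure_prob_off x (E :\ j) -
     \big[Rplus/0]_(j in ~: E) erasure_prob_off x E).
Proof.
have d1m : derivable_pt_lim (fun y => 1 - y) x (0 - 1).
  exact: derivable_pt_lim_minus (derivable_pt_lim_const 1 x) (derivable_pt_lim_id x).
have dpow1m := derivable_pt_lim_comp _ _ _ _ _ d1m (derivable_pt_lim_pow (1 - x) (N - #|E|)).
have dmul := derivable_pt_lim_mult _ _ _ _ _ (derivable_pt_lim_pow x #|E|) dpow1m.
have -> : \big[Rplus/0]_(j in E) erasure_prob_off x (E :\ j) =
          INR #|E| * x ^ (#|E|).-1 * (1 - x) ^ (N - #|E|).
  rewrite Rmult_assoc -sumR_const; apply: eq_bigr => j jE.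
  by rewrite /erasure_prob_off (cardsD1 j E) jE add1n subnS.
have -> : \big[Rplus/0]_(j in ~: E) erasure_prob_off x E =
          INR (N - #|E|) * x ^ #|E| * (1 - x) ^ (N - #|E|).-1.
  rewrite sumR_const /erasure_prob_off Rmult_assoc.
  by rewrite -(addKn #|E| #|~: E|) cardsC card_ord.
rewrite [X in derivable_pt_lim _ _ X](_ : _ = INR #|E| * x ^ (#|E|).-1 * (1 - x) ^ (N - #|E|)
   + x ^ #|E| * (INR (N - #|E|) * (1 - x) ^ (N - #|E|).-1 * (0 - 1))); last by ring.
by apply: derivable_pt_lim_ext dmul.
Qed.

Definition erasure_avg (N : nat) (f : {set 'I_N} -> R) (p : R) : R :=
  \big[Rplus/0]_(E : {set 'I_N}) (erasure_prob p E * f E).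

Lemma russo_formula (N : nat) (f : {set 'I_N} -> R) x :
  derivable_pt_lim (erasure_avg f) x
    (\big[Rplus/0]_(j : 'I_N) \big[Rplus/0]_(E : {set 'I_N} | j \notin E)
       (erasure_prob_off x E * (f (j |: E) - f E))).
Proof.
pose pivot (j : 'I_N) (E : {set 'I_N}) :=
  (if j \in E then erasure_prob_off x (E :\ j) else 0) -
  (if j \notin E then erasure_prob_off x E else 0).
have -> : \big[Rplus/0]_(j : 'I_N) \big[Rplus/0]_(E : {set 'I_N} | j \notin E)
            (erasure_prob_off x E * (f (j |: E) - f E)) =
          \big[Rplus/0]_(E : {set 'I_N}) (\big[Rplus/0]_(j : 'I_N) pivot j E * f E).
  rewrite [RHS](eq_bigr (fun E => \big[Rplus/0]_(j : 'I_N) (pivot j E * f E))); last first.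
    by move=> E _; rewrite big_distrl.
  rewrite [RHS]exchange_big; apply: eq_bigr => j _ /=.
  rewrite [RHS](sumR_notin_split j); apply: eq_bigr => E jE.
  rewrite /pivot setU11 setU1K // (negbTE jE) /=; ring.
apply: derivable_pt_lim_sumR => E _.
apply: derivable_pt_lim_scal_right.
have -> : \big[Rplus/0]_(j : 'I_N) pivot j E =
          \big[Rplus/0]_(j in E) erasure_prob_off x (E :\ j) -
          \big[Rplus/0]_(j in ~: E) erasure_prob_off x E.
  rewrite sumR_minus; congr (_ - _); rewrite [RHS]big_mkcond //.
  by apply: eq_bigr => j _; rewrite in_setC.
exact: derivable_pt_lim_erasure_prob.
Qed.

Lemma erasure_avg_setU1 (N : nat) (i : 'I_N) (f : {set 'I_N} -> R) p :
  erasure_avg (fun E => f (i |: E)) p =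
  \big[Rplus/0]_(E : {set 'I_N} | i \notin E) (erasure_prob_off p E * f (i |: E)).
Proof.
rewrite /erasure_avg (sumR_notin_split i); apply: eq_bigr => E iE.
rewrite setUA setUid (erasure_prob_notin p iE) (erasure_prob_setU1 p iE); ring.
Qed.

Lemma erasure_prob_ge0 (N : nat) p (E : {set 'I_N}) :
  0 <= p <= 1 -> 0 <= erasure_prob p E.
Proof. by move=> p01; apply: Rmult_le_pos; apply: pow_le; lra. Qed.

Lemma erasure_prob_off_ge0 (N : nat) p (E : {set 'I_N}) :
  0 <= p <= 1 -> 0 <= erasure_prob_off p E.
Proof. by move=> p01; apply: Rmult_le_pos; apply: pow_le; lra. Qed.

Lemma erasure_avg0 (N : nat) (f : {set 'I_N} -> R) : erasure_avg f 0 = f set0.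
Proof.
rewrite /erasure_avg (bigD1 set0) //= big1 => [|E E0].
  by rewrite /erasure_prob cards0 /= Rminus_0_r pow1; ring.
by rewrite /erasure_prob pow_i ?Rmult_0_l //; apply/ltP; rewrite card_gt0.
Qed.

Lemma erasure_avg1 (N : nat) (f : {set 'I_N} -> R) : erasure_avg f 1 = f setT.
Proof.
rewrite /erasure_avg (bigD1 setT) //= big1 => [|E ET].
  by rewrite /erasure_prob cardsT card_ord subnn pow1 /=; ring.
have /properP[_ [i _ /card_lt_notin ltEN]] : E \proper setT by rewrite properT.
rewrite /erasure_prob Rminus_diag pow_i ?Rmult_0_r ?Rmult_0_l //.
by apply/ltP; rewrite subn_gt0.
Qed.

Lemma derivable_nondecreasing (f f' : R -> R) a b :
  (forall c, derivable_pt_lim f c (f' c)) -> (forall c, a <= c <= b -> 0 <= f' c) ->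
  a <= b -> f a <= f b.
Proof.
move=> df f'0 /Rle_lt_or_eq_dec[ab | ->]; last lra.
have [c [fab cab]] := MVT_cor2 f f' a b ab (fun c _ => df c).
have := f'0 c (ltac:(lra)); nra.
Qed.

Lemma erasure_avg_nondecreasing (N : nat) (f : {set 'I_N} -> R) a b :
  (forall E F : {set 'I_N}, E \subset F -> f E <= f F) -> 0 <= a -> a <= b -> b <= 1 ->
  erasure_avg f a <= erasure_avg f b.
Proof.
move=> f_mono a0 ab b1; apply: (derivable_nondecreasing (russo_formula f)) => // c c01.
apply: sumR_ge0 => j _; apply: sumR_ge0 => E _; apply: Rmult_le_pos.
  by apply: erasure_prob_off_ge0; lra.
by have := f_mono _ _ (subsetUr [set j] E); lra.
Qed.

Lemma antiderivative_increment_bounds (G h : R -> R) a b :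
  (forall c, derivable_pt_lim G c (h c)) ->
  (forall s t, a <= s -> s <= t -> t <= b -> h s <= h t) -> a <= b ->
  (b - a) * h a <= G b - G a <= (b - a) * h b.
Proof.
move=> dG h_mono /Rle_lt_or_eq_dec[ab | ->]; last lra.
have [c [Gab cab]] := MVT_cor2 G h a b ab (fun c _ => dG c).
have := h_mono a c (Rle_refl a) (ltac:(lra)) (ltac:(lra)).
have := h_mono c b (ltac:(lra)) (ltac:(lra)) (Rle_refl b).
rewrite Gab; split; nra.
Qed.

Lemma infR_is_glb (S : R -> Prop) (x0 m : R) :
  S x0 -> (forall x, S x -> m <= x) -> is_glb S (infR S).
Proof.
move=> Sx0 Sm; apply: epsilon_spec.
have [|| q [q_ub q_lub]] := completeness (fun x => S (- x)).
- by exists (- m) => x Sx; have := Sm _ Sx; lra.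
- by exists (- x0); rewrite Ropp_involutive.
exists (- q); split => [x Sx | l l_lb].
  by have := q_ub (- x) (ltac:(by rewrite /= Ropp_involutive)); lra.
by have := q_lub (- l) (fun x Sx => ltac:(have := l_lb _ Sx; lra)); lra.
Qed.

(** * Linear codes and their subcodes *)

Section LinearCode.
Local Open Scope nat_scope.
Variable N : nat.

Definition supp (d : word N) : {set 'I_N} := [set j | d j].

Lemma xorwE (u v : word N) j : xorw u v j = xorb (u j) (v j).
Proof. by rewrite ffunE. Qed.

Lemma xorwK (u v : word N) : xorw u (xorw u v) = v.
Proof. by apply/ffunP => j; rewrite !xorwE; case: (u j); case: (v j). Qed.

Lemma subset_supp_xorw (u v : word N) (F : {set 'I_N}) :
  (supp (xorw u v) \subset F) = [forall j, (j \notin F) ==> (v j == u j)].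
Proof.
apply/subsetP/forallP => uvF j.
  apply/implyP => jF; apply: contraNT jF => uvj; apply: uvF.
  by rewrite inE xorwE; case: (u j) (v j) uvj => -[].
rewrite inE xorwE => uvj; apply: contraT => jF.
by move: (implyP (uvF j) jF); case: (u j) (v j) uvj => -[].
Qed.

Lemma card_xorw_translate (D : {set word N}) (x : word N) (P : pred (word N)) :
  is_binary_linear_code D -> x \in D ->
  #|[set d in D | P (xorw x d)]| = #|[set d in D | P d]|.
Proof.
case=> _ linD xD; rewrite -[RHS](card_imset _ (can_inj (xorwK x))); apply: eq_card => y.
apply/idP/imsetP => [| [d]]; rewrite !inE.
  by case/andP=> yD Py; exists (xorw x y); rewrite ?inE ?linD ?xorwK.
by case/andP=> dD Pd ->; rewrite linD ?xorwK.
Qed.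

Variable C : {set word N}.
Hypothesis linC : is_binary_linear_code C.

Definition subcode (F : {set 'I_N}) : {set word N} := [set d in C | supp d \subset F].

(* Bit [i] cannot be recovered from the unerased bits when [F] is erased. *)
Definition undetermined (i : 'I_N) (F : {set 'I_N}) : bool := [exists d in subcode F, d i].

Definition subcode_dim (F : {set 'I_N}) : nat := trunc_log 2 #|subcode F|.

Lemma subcode_linear (F : {set 'I_N}) : is_binary_linear_code (subcode F).
Proof.
case: linC => C0 linC'; split.
  by rewrite inE C0; apply/subsetP => j; rewrite inE ffunE.
move=> u v; rewrite !inE => /andP[uC /subsetP uF] /andP[vC /subsetP vF].
rewrite linC' //=; apply/subsetP => j; rewrite inE xorwE.
by case uj: (u j); [rewrite uF ?inE | move=> vj; rewrite vF ?inE].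
Qed.

Lemma subcode0 : subcode set0 = [set zerow N].
Proof.
apply/setP => d; rewrite !inE subset0; apply/andP/eqP => [[_ /eqP d0] | ->].
  apply/ffunP => j; rewrite ffunE; apply/negbTE/negP => dj.
  by have := in_set0 j; rewrite -d0 inE dj.
by case: linC => C0 _; split => //; apply/eqP/setP => j; rewrite !inE ffunE.
Qed.

Lemma subcodeT : subcode setT = C.
Proof. by apply/setP => d; rewrite inE subsetT andbT. Qed.

Lemma subcode_setD1 (i : 'I_N) (F : {set 'I_N}) :
  subcode (F :\ i) = [set d in subcode F | ~~ d i].
Proof. by apply/setP => d; rewrite !inE subsetD1 inE andbA. Qed.

Lemma card_subcode_setD1 (i : 'I_N) (F : {set 'I_N}) :
  #|subcode F| = (undetermined i F).+1 * #|subcode (F :\ i)|.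
Proof.
have -> : #|subcode F| = #|[set d in subcode F | d i]| + #|[set d in subcode F | ~~ d i]|.
  rewrite -(cardsID [set d : word N | d i] (subcode F)); congr (_ + _); apply: eq_card => d.
    by rewrite !inE andbC.
  by rewrite !inE andbC.
rewrite subcode_setD1; case: (boolP (undetermined i F)) => [/existsP[d0 /andP[d0F d0i]] | nd].
  have -> : [set d in subcode F | d i] = [set d in subcode F | ~~ xorw d0 d i].
    by apply/setP => d; rewrite !inE xorwE d0i negbK.
  by rewrite (card_xorw_translate (fun d => ~~ d i) (subcode_linear F) d0F) addnn -mul2n.
have -> : [set d in subcode F | d i] = set0.
  apply/setP => d; rewrite in_set0 in_set; apply: contraNF nd => /andP[dF di].
  by apply/existsP; exists d; rewrite dF.
by rewrite cards0 mul1n.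
Qed.

Lemma card_subcode_pow2 (F : {set 'I_N}) : #|subcode F| = expn 2 (subcode_dim F).
Proof.
suff [k cardS] : exists k, #|subcode F| = expn 2 k.
  by rewrite /subcode_dim cardS trunc_expnK.
move sizeF : #|F| => n; elim: n F sizeF => [|n IH] F sizeF.
  by exists 0; move/eqP: sizeF; rewrite cards_eq0 => /eqP ->; rewrite subcode0 cards1.
have [i iF] : exists i, i \in F by apply/set0Pn; rewrite -card_gt0 sizeF.
have sizeFi : #|F :\ i| = n by move: sizeF; rewrite (cardsD1 i) iF => -[].
have [k cardS] := IH _ sizeFi; exists (undetermined i F + k).
by rewrite (card_subcode_setD1 i) cardS expnD; case: undetermined.
Qed.

Lemma subcode_dim_setU1 (i : 'I_N) (E : {set 'I_N}) : i \notin E ->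
  subcode_dim (i |: E) = undetermined i (i |: E) + subcode_dim E.
Proof.
move=> iE; have := card_subcode_setD1 i (i |: E).
rewrite setU1K // !card_subcode_pow2 => /eqP.
by case: undetermined; rewrite ?mul1n -?expnS eqn_exp2l // => /eqP.
Qed.

Lemma subcode_dim0 : subcode_dim set0 = 0.
Proof. by rewrite /subcode_dim subcode0 cards1. Qed.

Lemma subcode_dimT : subcode_dim setT = code_dim C.
Proof. by rewrite /subcode_dim subcodeT. Qed.

Lemma undetermined_subset (i : 'I_N) (E F : {set 'I_N}) :
  E \subset F -> undetermined i E -> undetermined i F.
Proof.
move=> EF /existsP[d /andP[]]; rewrite inE => /andP[dC dE] di.
by apply/existsP; exists d; rewrite inE dC (subset_trans dE EF).
Qed.

Lemma undetermined_mem (i : 'I_N) (F : {set 'I_N}) : undetermined i F -> i \in F.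
Proof.
by case/existsP=> d /andP[]; rewrite inE => /andP[_ /subsetP dF] di; rewrite dF ?inE.
Qed.

Lemma undetermined_codeword (x : word N) (i : 'I_N) (E : {set 'I_N}) : x \in C ->
  [exists c in C, [forall j, (j \notin E) ==> (c j == x j)] && (c i != x i)] =
  undetermined i E.
Proof.
case: linC => _ linC' xC; apply/existsP/existsP => -[c].
  case/and3P=> cC xcE xci; exists (xorw x c).
  by rewrite inE linC' // subset_supp_xorw xcE xorwE; case: (x i) (c i) xci => -[].
rewrite inE => /andP[/andP[cC cE] ci]; exists (xorw x c); rewrite linC' //=.
by rewrite -subset_supp_xorw xorwK cE xorwE ci; case: (x i).
Qed.

Lemma undeterminedT (i : 'I_N) : proper_code C -> undetermined i setT.
Proof. by case/(_ i)=> c cC ci; apply/existsP; exists c; rewrite inE cC subsetT ci. Qed.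

Lemma undetermined_set1 (i : 'I_N) : min_dist_ge2 C -> ~~ undetermined i [set i].
Proof.
move=> dist2; apply/existsP => -[d /andP[]]; rewrite inE => /andP[dC di1] di.
have d_nz : d != zerow N by apply: contraTneq di => ->; rewrite ffunE.
have := dist2 d dC d_nz; rewrite /weight.
suff -> : [set j | d j] = [set i] by rewrite cards1.
by apply/eqP; rewrite eqEsubset di1 sub1set inE.
Qed.

End LinearCode.

(** * Bit-MAP erasure and the EXIT function *)

Section Channel.
Variables (N : nat) (C : {set word N}).
Hypothesis linC : is_binary_linear_code C.

Lemma card_code_gt0 : 0 < INR #|C|.
Proof. by case: linC => C0 _; apply: lt_0_INR; apply/ltP/card_gt0P; exists (zerow N). Qed.

Lemma sumR_code_uniform (a : R) : \big[Rplus/0]_(x in C) (/ INR #|C| * a) = a.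
Proof. by rewrite sumR_const -Rmult_assoc Rinv_r ?Rmult_1_l //; have := card_code_gt0; lra. Qed.

Lemma bit_erasure_probE p (i : 'I_N) :
  bit_erasure_prob C p i = erasure_avg (fun E => indR (undetermined C i E)) p.
Proof.
rewrite /bit_erasure_prob -[RHS]sumR_code_uniform; apply: eq_bigr => x xC.
rewrite /erasure_avg big_distrr; apply: eq_bigr => E _ /=.
by rewrite /jointw undetermined_codeword // Rmult_assoc.
Qed.

Lemma obs_wo_eq (i : 'I_N) (x x' : word N) (E E' : {set 'I_N}) :
  (obs_wo i x' E' == obs_wo i x E) =
  (i |: E' == i |: E) && (supp (xorw x x') \subset i |: E).
Proof.
rewrite subset_supp_xorw; apply/eqP/andP => [obs_eq | [/eqP iEE' /forallP agree]].
  have obs_j j := congr1 (fun y : {ffun 'I_N -> option bool} => y j) obs_eq.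
  split; first by apply/eqP/setP => j; have := obs_j j; rewrite !ffunE !inE;
    case: (j == i) (j \in E') (j \in E) => -[] [].
  apply/forallP => j; apply/implyP; rewrite !inE negb_or => /andP[ji jE].
  have := obs_j j; rewrite !ffunE (negbTE ji) (negbTE jE) /=.
  by case: (j \in E') => //= -[->].
apply/ffunP => j; rewrite !ffunE -!in_setU1 iEE'.
by case: (boolP (j \in i |: E)) => // /(implyP (agree j)) /eqP ->.
Qed.

(* For [i \in F]: the probability that the erasures outside [i] are [F :\ i]. *)
Definition obs_mass p (i : 'I_N) (F : {set 'I_N}) : R :=
  \big[Rplus/0]_(E : {set 'I_N}) (erasure_prob p E * indR (i |: E == F)).

Lemma sumR_jointw_obs p (i : 'I_N) (x : word N) (E : {set 'I_N}) (B : pred (word N)) :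
  x \in C ->
  \big[Rplus/0]_(x' in C) \big[Rplus/0]_(E' : {set 'I_N})
     (jointw C p x' E' * indR ((obs_wo i x' E' == obs_wo i x E) && B (xorw x x'))) =
  / INR #|C| * INR #|[set d in subcode C (i |: E) | B d]| * obs_mass p i (i |: E).
Proof.
have -> : [set d in subcode C (i |: E) | B d] = [set d in C | (supp d \subset i |: E) && B d].
  by apply/setP => d; rewrite !inE andbA.
move=> xC; rewrite -(card_xorw_translate (fun d => (supp d \subset i |: E) && B d) linC xC).
rewrite -sumR_indR [_ * obs_mass _ _ _]Rmult_comm -Rmult_assoc big_distrr /=.
apply: eq_bigr => x' _; rewrite /obs_mass !big_distrl /=; apply: eq_bigr => E' _.
rewrite (_ : jointw C p x' E' = / INR #|C| * erasure_prob p E') //.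
rewrite obs_wo_eq -andbA indR_andb -[LHS]Rmult_assoc.
by congr (Rmult _ _); rewrite [RHS]Rmult_comm Rmult_assoc.
Qed.

Lemma probY_obs p (i : 'I_N) (x : word N) (E : {set 'I_N}) : x \in C ->
  probY C p i (obs_wo i x E) =
  / INR #|C| * INR #|subcode C (i |: E)| * obs_mass p i (i |: E).
Proof.
move=> xC; rewrite (_ : subcode C _ = [set d in subcode C (i |: E) | predT d]); last first.
  by apply/setP => d; rewrite inE andbT.
rewrite -(sumR_jointw_obs _ _ _ predT xC).
by apply: eq_bigr => x' _; apply: eq_bigr => E' _; rewrite andbT.
Qed.

Lemma probXY_obs p (i : 'I_N) (x : word N) (E : {set 'I_N}) : x \in C ->
  probXY C p i (x i) (obs_wo i x E) =
  / INR #|C| * INR #|subcode C ((i |: E) :\ i)| * obs_mass p i (i |: E).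
Proof.
move=> xC; rewrite subcode_setD1 -(sumR_jointw_obs _ _ _ (fun d => ~~ d i) xC).
apply: eq_bigr => x' _; apply: eq_bigr => E' _.
by rewrite xorwE; case: (x i) (x' i) => -[].
Qed.

Lemma neg_log2_inv_succ (b : bool) : - log2 (/ INR b.+1) = indR b.
Proof.
have ln2_gt0 := ln_lt_2.
case: b; rewrite /log2 /indR /=; last by rewrite Rinv_1 ln_1; field; lra.
by rewrite (_ : 1 + 1 = 2) ?ln_Rinv; try field; lra.
Qed.

Lemma cond_entropy_term p (i : 'I_N) (x : word N) (E : {set 'I_N}) :
  0 <= p <= 1 -> x \in C -> erasure_prob p E <> 0 ->
  - log2 (probXY C p i (x i) (obs_wo i x E) / probY C p i (obs_wo i x E)) =
  indR (undetermined C i (i |: E)).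
Proof.
move=> p01 xC pE_neq0.
have mass_pos : 0 < obs_mass p i (i |: E).
  have : erasure_prob p E * indR (i |: E == i |: E) <= obs_mass p i (i |: E).
    rewrite /obs_mass; apply: sumR_term_le => E'.
    by apply: Rmult_le_pos; [exact: erasure_prob_ge0 | rewrite /indR; case: eqP => _; lra].
  by rewrite eqxx /indR Rmult_1_r; have := erasure_prob_ge0 E p01; lra.
have sub_pos : 0 < INR #|subcode C ((i |: E) :\ i)|.
  by apply: lt_0_INR; apply/ltP; rewrite card_subcode_pow2 ?expn_gt0.
have k_pos : 0 < INR (undetermined C i (i |: E)).+1 by apply: lt_0_INR; apply/ltP.
rewrite probXY_obs // probY_obs // (card_subcode_setD1 linC i (i |: E)) mult_INR.
rewrite -neg_log2_inv_succ; congr (Ropp (log2 _)).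
have C_pos := card_code_gt0.
(* [field] fails unless this cardinality is abstracted away. *)
by move: (INR #|subcode C _|) sub_pos => s s_pos; field; lra.
Qed.

Lemma cond_entropyE p (i : 'I_N) : 0 <= p <= 1 ->
  cond_entropy C p i = erasure_avg (fun E => indR (undetermined C i (i |: E))) p.
Proof.
move=> p01; rewrite /cond_entropy -[RHS]sumR_code_uniform; apply: eq_bigr => x xC.
rewrite /erasure_avg big_distrr; apply: eq_bigr => E _ /=; rewrite /jointw.
have [-> | pE_neq0] := Req_dec (erasure_prob p E) 0; first ring.
by rewrite cond_entropy_term // Rmult_assoc.
Qed.

Lemma bit_erasure_prob_cond_entropy p (i : 'I_N) : 0 <= p <= 1 ->
  bit_erasure_prob C p i = p * cond_entropy C p i.
Proof.
move=> p01; rewrite bit_erasure_probE cond_entropyE //.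
rewrite (erasure_avg_setU1 i (fun F => indR (undetermined C i F))) big_distrr /=.
rewrite /erasure_avg (sumR_notin_split i); apply: eq_bigr => E iE.
have /negbTE -> : ~~ undetermined C i E by apply: contra iE; apply: undetermined_mem.
by rewrite (erasure_prob_setU1 p iE) /indR; ring.
Qed.

End Channel.

Section ExitFunction.
Variables (N : nat) (C : {set word N}).
Hypotheses (linC : is_binary_linear_code C) (N_gt0 : (0 < N)%nat).

Definition unrecoverable_frac (E : {set 'I_N}) : R :=
  / INR N * \big[Rplus/0]_(i : 'I_N) indR (undetermined C i (i |: E)).

Definition dim_frac (E : {set 'I_N}) : R := INR (subcode_dim C E) / INR N.

Lemma INR_N_neq0 : INR N <> 0.
Proof. by apply: not_0_INR; apply/eqP; rewrite -lt0n. Qed.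

Lemma exit_funE p : 0 <= p <= 1 -> exit_fun C p = erasure_avg unrecoverable_frac p.
Proof.
move=> p01; rewrite /exit_fun (eq_bigr _ (fun i _ => cond_entropyE linC i p01)).
rewrite /erasure_avg exchange_big big_distrr /=; apply: eq_bigr => E _.
by rewrite /unrecoverable_frac -big_distrr /=; ring.
Qed.

(* Russo's formula turns increments of [dim_frac] into [unrecoverable_frac]:
   this is the area theorem of EXIT functions. *)
Lemma derivable_pt_lim_dim_frac_avg x :
  derivable_pt_lim (erasure_avg dim_frac) x (erasure_avg unrecoverable_frac x).
Proof.
suff -> : erasure_avg unrecoverable_frac x =
    \big[Rplus/0]_(j : 'I_N) \big[Rplus/0]_(E : {set 'I_N} | j \notin E)
       (erasure_prob_off x E * (dim_frac (j |: E) - dim_frac E)) by exact: russo_formula.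
rewrite {1}/erasure_avg (eq_bigr (fun E => \big[Rplus/0]_(j : 'I_N)
    (erasure_prob x E * (/ INR N * indR (undetermined C j (j |: E)))))); last first.
  by move=> E _; rewrite /unrecoverable_frac !big_distrr.
rewrite exchange_big; apply: eq_bigr => j _ /=.
transitivity (erasure_avg (fun E => / INR N * indR (undetermined C j (j |: E))) x) => //.
rewrite (erasure_avg_setU1 j (fun F => / INR N * indR (undetermined C j F))).
apply: eq_bigr => E jE; rewrite /dim_frac subcode_dim_setU1 // plus_INR INR_bool.
by field; apply: INR_N_neq0.
Qed.

Lemma unrecoverable_frac_subset (E F : {set 'I_N}) :
  E \subset F -> unrecoverable_frac E <= unrecoverable_frac F.
Proof.
move=> EF; apply: Rmult_le_compat_l.
  by apply/Rlt_le/Rinv_0_lt_compat/lt_0_INR/ltP.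
apply: sumR_le => i _; rewrite /indR.
case: ifP => [/(undetermined_subset (setUS [set i] EF)) -> | _]; first lra.
by case: ifP; lra.
Qed.

Lemma exit_fun_nondecreasing a b : 0 <= a -> a <= b -> b <= 1 ->
  exit_fun C a <= exit_fun C b.
Proof.
move=> a0 ab b1; rewrite !exit_funE; try lra.
exact: erasure_avg_nondecreasing unrecoverable_frac_subset a0 ab b1.
Qed.

Lemma dim_frac_avg_increment a b : 0 <= a -> a <= b -> b <= 1 ->
  (b - a) * exit_fun C a <= erasure_avg dim_frac b - erasure_avg dim_frac a <=
  (b - a) * exit_fun C b.
Proof.
move=> a0 ab b1; rewrite !exit_funE; try lra.
apply: antiderivative_increment_bounds derivable_pt_lim_dim_frac_avg _ ab => s t a_s st tb.
by apply: erasure_avg_nondecreasing unrecoverable_frac_subset _ st _; lra.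
Qed.

Lemma dim_frac_avg_area : erasure_avg dim_frac 1 - erasure_avg dim_frac 0 = rate C.
Proof.
rewrite erasure_avg1 erasure_avg0 /dim_frac subcode_dimT // subcode_dim0 //= /rate.
by field; apply: INR_N_neq0.
Qed.

Lemma exit_fun0 : min_dist_ge2 C -> exit_fun C 0 = 0.
Proof.
move=> dist2; rewrite exit_funE ?erasure_avg0; last lra.
rewrite /unrecoverable_frac big1 ?Rmult_0_r // => i _.
by rewrite setU0 (negbTE (undetermined_set1 i dist2)).
Qed.

Lemma exit_fun1 : proper_code C -> exit_fun C 1 = 1.
Proof.
move=> properC; rewrite exit_funE ?erasure_avg1; last lra.
rewrite /unrecoverable_frac (eq_bigr (fun _ => 1)); last first.
  by move=> i _; rewrite setUT undeterminedT.
rewrite (sumR_const 'I_N) card_ord Rmult_1_r Rinv_l //; exact: INR_N_neq0.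
Qed.

Lemma Pb_exit_fun p : 0 <= p <= 1 -> Pb C p = p * exit_fun C p.
Proof.
move=> p01; rewrite /Pb /exit_fun (eq_bigr _ (fun i _ => bit_erasure_prob_cond_entropy linC i p01)).
by rewrite -big_distrr /=; ring.
Qed.

Lemma exit_threshold_is_glb t : proper_code C -> t <= 1 ->
  is_glb (fun p => 0 <= p <= 1 /\ t <= exit_fun C p) (exit_threshold C t).
Proof.
move=> properC t1; apply: (@infR_is_glb _ 1 0) => [|p [[p0 _] _] //].
by rewrite exit_fun1 //; lra.
Qed.

End ExitFunction.

(** * Sequences of EXIT-like functions *)

Definition eventually (P : nat -> Prop) : Prop :=
  exists n0, forall n, (n0 <= n)%coq_nat -> P n.

Lemma eventually_forall (P : nat -> Prop) : (forall n, P n) -> eventually P.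
Proof. by move=> allP; exists 0%nat. Qed.

Lemma eventually_impl (P Q : nat -> Prop) :
  eventually P -> (forall n, P n -> Q n) -> eventually Q.
Proof. by move=> [n0 evP] PQ; exists n0 => n n0n; apply/PQ/evP. Qed.

Lemma eventually_and (P Q : nat -> Prop) :
  eventually P -> eventually Q -> eventually (fun n => P n /\ Q n).
Proof.
move=> [n1 evP] [n2 evQ]; exists (Nat.max n1 n2) => n n12n.
by split; [apply: evP; lia | apply: evQ; lia].
Qed.

Lemma Un_cv_eventually (u : nat -> R) l e :
  Un_cv u l -> 0 < e -> eventually (fun n => l - e < u n < l + e).
Proof.
move=> cv_u e_pos; have [n0 close] := cv_u e e_pos; exists n0 => n n0n.
by have /Rabs_def2 := close n n0n; lra.
Qed.

Lemma eventually_Un_cv (u : nat -> R) l :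
  (forall e, 0 < e -> eventually (fun n => l - e < u n < l + e)) -> Un_cv u l.
Proof.
move=> close e e_pos; have [n0 close_e] := close e e_pos; exists n0 => n n0n.
by apply: Rabs_def1; have := close_e n n0n; lra.
Qed.

Section ExitEquivalence.
Variables (h G Pbit thr : nat -> R -> R) (rn : nat -> R) (r : R).
Hypotheses (r01 : 0 < r < 1) (rn_cv : Un_cv rn r).
Hypothesis h_mono : forall n a b, 0 <= a -> a <= b -> b <= 1 -> h n a <= h n b.
Hypotheses (h0 : forall n, h n 0 = 0) (h1 : forall n, h n 1 = 1).
Hypothesis G_increment : forall n a b, 0 <= a -> a <= b -> b <= 1 ->
  (b - a) * h n a <= G n b - G n a <= (b - a) * h n b.
Hypothesis G_area : forall n, G n 1 - G n 0 = rn n.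
Hypothesis Pbit_h : forall n p, 0 <= p <= 1 -> Pbit n p = p * h n p.
Hypothesis thr_glb : forall n t, t <= 1 ->
  is_glb (fun p => 0 <= p <= 1 /\ t <= h n p) (thr n t).

Definition Pbit_below := forall p, 0 <= p < 1 - r -> Un_cv (fun n => Pbit n p) 0.
Definition h_below := forall p, 0 <= p < 1 - r -> Un_cv (fun n => h n p) 0.
Definition h_above := forall p, 1 - r < p <= 1 -> Un_cv (fun n => h n p) 1.
Definition thr_sharp := forall eps, 0 < eps <= 1 / 2 ->
  Un_cv (fun n => thr n (1 - eps) - thr n eps) 0.

Lemma h_01 n p : 0 <= p <= 1 -> 0 <= h n p <= 1.
Proof. by move=> [p0 p1]; rewrite -(h0 n) -(h1 n); split; apply: h_mono; lra. Qed.

Lemma rate_le_split n p q : 0 <= p -> p <= q -> q <= 1 ->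
  rn n <= (1 - q) + (q - p) * h n q + p * h n p.
Proof.
move=> p0 pq q1; rewrite -G_area.
have := G_increment n p0 pq q1; have := G_increment n (Rle_refl 0) p0 (Rle_trans _ _ _ pq q1).
have := G_increment n (Rle_trans _ _ _ p0 pq) q1 (Rle_refl 1); rewrite h1; lra.
Qed.

Lemma rate_ge_tail n p : 0 <= p <= 1 -> (1 - p) * h n p <= rn n.
Proof.
move=> [p0 p1]; rewrite -G_area.
have := G_increment n p0 p1 (Rle_refl 1); have := G_increment n (Rle_refl 0) p0 p1.
rewrite h0; lra.
Qed.

Lemma thr_01 n t : t <= 1 -> 0 <= thr n t <= 1.
Proof.
move=> t1; have [lb glb] := thr_glb n t1; split.
  by apply: glb => p [[]].
by apply: lb; rewrite h1; lra.
Qed.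

Lemma thr_le n t p : t <= 1 -> 0 <= p <= 1 -> t <= h n p -> thr n t <= p.
Proof. by move=> t1 p01 tp; apply: (proj1 (thr_glb n t1)). Qed.

Lemma le_thr n t a : t <= 1 ->
  (forall s, 0 <= s <= 1 -> t <= h n s -> a <= s) -> a <= thr n t.
Proof. by move=> t1 a_lb; apply: (proj2 (thr_glb n t1)) => s []; apply: a_lb. Qed.

Lemma thr_lt n t p : t <= 1 -> thr n t < p -> p <= 1 -> t <= h n p.
Proof.
move=> t1 thr_p p1.
have [[s [[s01 ts] sp]] | no_s] :=
  classic (exists s, (0 <= s <= 1 /\ t <= h n s) /\ s < p).
  by apply: Rle_trans ts _; apply: h_mono; lra.
suff : p <= thr n t by lra.
apply: le_thr => // s s01 ts; apply: Rnot_lt_le => sp; apply: no_s; exists s; tauto.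
Qed.

Lemma Pbit_below_h_below : Pbit_below -> h_below.
Proof.
move=> Pb_cv p p_range; apply: eventually_Un_cv => e e_pos.
have p01 : 0 <= p <= 1 by lra.
have [p_pos | <-] := Rle_lt_or_eq_dec 0 p (proj1 p_range); last first.
  by apply: eventually_forall => n; rewrite h0; lra.
apply: (eventually_impl (Un_cv_eventually (Pb_cv p p_range) (Rmult_lt_0_compat _ _ e_pos p_pos))).
move=> n; rewrite Pbit_h // => Pb_small; have := h_01 n p01.
split; first lra.
by apply: (Rmult_lt_reg_l p); lra.
Qed.

Lemma h_below_Pbit_below : h_below -> Pbit_below.
Proof.
move=> h_cv p p_range; apply: eventually_Un_cv => e e_pos.
have p01 : 0 <= p <= 1 by lra.
apply: (eventually_impl (Un_cv_eventually (h_cv p p_range) e_pos)) => n h_small.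
by rewrite Pbit_h //; have := h_01 n p01; nra.
Qed.

(* Area argument: the area [rn n] under [h n] tends to [r] while [h n] vanishes
   below [1 - r], so it must be close to 1 just above [1 - r]. *)
Lemma h_below_above : h_below -> h_above.
Proof.
move=> h_cv q q_range; apply: eventually_Un_cv => d d_pos.
have q01 : 0 <= q <= 1 by lra.
have [d_big | d1] := Rlt_le_dec 1 d.
  by apply: eventually_forall => n; have := h_01 n q01; lra.
pose c := q - (1 - r); pose eta := Rmin (d * c / 2) (1 - r); pose p := 1 - r - eta.
have c_pos : 0 < c by rewrite /c; lra.
have dc_pos : 0 < d * c by apply: Rmult_lt_0_compat.
have eta_pos : 0 < eta by apply: Rmin_glb_lt; lra.
have eta_dc : eta <= d * c / 2 by apply: Rmin_l.
have eta_r : eta <= 1 - r by apply: Rmin_r.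
have p_range : 0 <= p < 1 - r by rewrite /p; lra.
have p_le_q : p <= q by rewrite /p /c in c_pos *; lra.
have e_pos : 0 < d * c / 8 by lra.
apply: (eventually_impl (eventually_and (Un_cv_eventually (h_cv p p_range) e_pos)
                                         (Un_cv_eventually rn_cv e_pos))) => n [hp rn_n].
have := rate_le_split n (proj1 p_range) p_le_q (proj2 q01).
have := h_01 n (conj (proj1 p_range) (ltac:(lra) : p <= 1)); have := h_01 n q01.
move=> hq01 hp01 split_bound; split; last lra.
apply: Rnot_le_lt => hq_small.
have : (q - p) * h n q <= (q - p) * (1 - d) by apply: Rmult_le_compat_l; lra.
have : p * h n p <= d * c / 8 by nra.
have : (q - p) * (1 - d) = eta + c - d * c - d * eta by rewrite /p /c; ring.
have : 0 <= d * eta by nra.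
have : q = c + (1 - r) by rewrite /c; ring.
lra.
Qed.

(* If [h n] reaches [eps] below [1 - r] while its [eps]-to-[1 - eps] transition
   window is short, the area [rn n] exceeds [r] by a fixed amount. *)
Lemma thr_sharp_h_below : thr_sharp -> h_below.
Proof.
move=> sharp p p_range; apply: eventually_Un_cv => d d_pos.
have p01 : 0 <= p <= 1 by lra.
pose g := 1 - r - p; pose eps := Rmin d (Rmin (1 / 2) (g / 4)).
have g_def : g = 1 - r - p by [].
have eps_d : eps <= d by apply: Rmin_l.
have eps_half : eps <= 1 / 2 by apply: Rle_trans (Rmin_r _ _) (Rmin_l _ _).
have eps_g : eps <= g / 4 by apply: Rle_trans (Rmin_r _ _) (Rmin_r _ _).
have eps_pos : 0 < eps by apply: Rmin_glb_lt => //; apply: Rmin_glb_lt; lra.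
have g_pos : 0 < g by lra.
have g8_pos : 0 < g / 8 by lra.
have g2_pos : 0 < g / 2 by lra.
apply: (eventually_impl (eventually_and
  (Un_cv_eventually (sharp eps (conj eps_pos eps_half)) g8_pos)
  (Un_cv_eventually rn_cv g2_pos))) => n [window rn_n].
have := h_01 n p01; split; first lra.
apply: Rnot_le_lt => hp_big.
have thr_eps : thr n eps <= p by apply: thr_le => //; lra.
pose p2 := p + g / 4.
have p2_def : p2 = p + g / 4 by [].
have p2_01 : 0 <= p2 <= 1 by lra.
have hp2 : 1 - eps <= h n p2 by apply: thr_lt; lra.
have := rate_ge_tail n p2_01.
have : (1 - p2) * (1 - eps) <= (1 - p2) * h n p2 by apply: Rmult_le_compat_l; lra.
have : (1 - p2) * eps <= eps by nra.
lra.
Qed.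

Lemma h_step_thr_sharp : h_below -> h_above -> thr_sharp.
Proof.
move=> h_lo h_hi eps eps_range; apply: eventually_Un_cv => tau tau_pos.
have thr_eps_le n : thr n eps <= thr n (1 - eps).
  by apply: le_thr => [|s s01 ts]; [lra | apply: thr_le => //; lra].
have thr_lo : eventually (fun n => 1 - r - tau / 3 <= thr n eps).
  have [a_neg | a_nneg] := Rlt_le_dec (1 - r - tau / 3) 0.
    by apply: eventually_forall => n; have := thr_01 n (_ : eps <= 1); lra.
  have a_range : 0 <= 1 - r - tau / 3 < 1 - r by lra.
  apply: (eventually_impl (Un_cv_eventually (h_lo _ a_range) (proj1 eps_range))) => n ha.
  apply: le_thr => [|s s01 ts]; first lra.
  apply: Rnot_lt_le => sa; have := h_mono n (proj1 s01) (Rlt_le _ _ sa) (ltac:(lra)); lra.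
have thr_hi : eventually (fun n => thr n (1 - eps) <= 1 - r + tau / 3).
  have [b_big | b1] := Rlt_le_dec 1 (1 - r + tau / 3).
    by apply: eventually_forall => n; have := thr_01 n (_ : 1 - eps <= 1); lra.
  have b_range : 1 - r < 1 - r + tau / 3 <= 1 by lra.
  apply: (eventually_impl (Un_cv_eventually (h_hi _ b_range) (proj1 eps_range))) => n hb.
  by apply: thr_le; lra.
apply: (eventually_impl (eventually_and thr_lo thr_hi)) => n [lo hi].
by have := thr_eps_le n; lra.
Qed.

Theorem exit_equivalences :
  (Pbit_below <-> h_below /\ h_above) /\ (h_below /\ h_above <-> thr_sharp).
Proof.
split; split.
- by move/Pbit_below_h_below => h_lo; split; last exact: h_below_above.
- by case=> h_lo _; apply: h_below_Pbit_below.
- by case; apply: h_step_thr_sharp.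
- by move/thr_sharp_h_below => h_lo; split; last exact: h_below_above.
Qed.

End ExitEquivalence.

Local Close Scope R_scope.

Theorem proposition6 (N : nat -> nat) (C : forall n, {set word (N n)}) (r : R) :
  (forall n, (0 < N n)%N) ->
  (forall n, is_binary_linear_code (C n)) ->
  (forall n, proper_code (C n)) ->
  (forall n, min_dist_ge2 (C n)) ->
  (0 < r < 1)%R ->
  Un_cv (fun n => rate (C n)) r ->
  (capacity_achieving C r <-> exit_step C r) /\ (exit_step C r <-> exit_sharp C).
Proof.
move=> N_gt0 linC properC dist2 r01 rate_cv.
exact: (@exit_equivalences (fun n => exit_fun (C n)) (fun n => erasure_avg (dim_frac (C n)))
  (fun n => Pb (C n)) (fun n => exit_threshold (C n)) (fun n => rate (C n)) r r01 rate_cv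
  (fun n => exit_fun_nondecreasing (linC n) (N_gt0 n))
  (fun n => exit_fun0 (linC n) (dist2 n)) (fun n => exit_fun1 (linC n) (N_gt0 n) (properC n))
  (fun n => dim_frac_avg_increment (linC n) (N_gt0 n))
  (fun n => dim_frac_avg_area (linC n) (N_gt0 n))
  (fun n => Pb_exit_fun (linC n))
  (fun n t => exit_threshold_is_glb (linC n) (N_gt0 n) (properC n))).
Qed.
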